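(* For real $x>0$, $y>0$ with $xy<2\pi$, $$\sum_{n=0}^{\infty} B_n R_n(y)\,x^n=\frac{e^{y}}{x}\Phi(1,2,x^{-1})-y\,\Phi(e^{-xy},1,x^{-1})-\frac{1}{x}\Phi(e^{-xy},2,x^{-1})+x(y+1-e^{y}).$$
   Context: For an integer $n\ge 0$ and complex $y$, $R_n(y)=e^y-1-\frac{y}{1!}-\frac{y^2}{2!}-\dots-\frac{y^n}{n!}=e^y-\sum_{k=0}^n\frac{y^k}{k!}$. $B_n$ are the Bernoulli numbers, defined by $\frac{z}{e^z-1}=\sum_{n\ge0}B_n\frac{z^n}{n!}$ ($|z|<2\pi$). $\Phi(z,s,a)=\sum_{n=0}^{\infty}\frac{z^n}{(n+a)^s}$ is the Lerch transcendent. *)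

From Stdlib Require Import Reals.
From Coquelicot Require Import Coquelicot.
Open Scope R_scope.

Definition bern_gen (z : R) : R :=
  if Req_EM_T z 0 then 1 else z / (exp z - 1).

(* B_n = n-th derivative at 0 of the generating function, i.e.
   z/(e^z-1) = sum_n B_n z^n / n!. *)
Definition Bernoulli (n : nat) : R := Derive_n bern_gen n 0.

(* R_n(y) = e^y - sum_{k=0}^n y^k / k!  (sum_f_R0 f n has n+1 terms). *)
Definition Rrem (n : nat) (y : R) : R :=
  exp y - sum_f_R0 (fun k => y ^ k / INR (Factorial.fact k)) n.

Definition LerchPhi (z : R) (s : nat) (a : R) : R :=
  Series (fun n => z ^ n / (INR n + a) ^ s).

(* Write [g u = u / (e^u - 1) = sum_n b_n u^n], so [B_n = n! b_n].  By the
   integral form of Taylor's remainder, [B_n R_n(y) x^n] is the integral over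
   [[0, y]] of [e^t b_n (x (y - t))^n]; since the series of [g] converges
   absolutely for [|u| < 2 PI], summing gives the integral of
   [e^t g(x (y - t))].  Expanding [g u = sum_(m >= 1) u e^(-m u)] for [u >= 0]
   and integrating term by term produces the three Lerch series, whose [m = 0]
   terms account for [x (y + 1 - e^y)].

   The radius [2 PI] is obtained by real methods: [tanh (z/2)] is an explicit
   combination of [g z] and [g (2 z)], and [tan (z/2)], [tanh (z/2)] solve
   [phi' = (1 +- phi^2) / 2], so their derivatives at 0 are the same
   polynomials up to signs.  Hence the Taylor coefficients of [tanh (z/2)] are
   dominated by those of [tan (z/2)], which are nonnegative and therefore, by
   Taylor-Lagrange, at most [tan (s/2) / s^n] for every [s < PI]. *)

From Stdlib Require Import Reals Lra Lia.
From Coquelicot Require Import Coquelicot.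
Open Scope R_scope.

Lemma fact_pos n : 0 < INR (Factorial.fact n).
Proof. apply lt_0_INR, Nat.neq_0_lt_0, Factorial.fact_neq_0. Qed.

Lemma is_lim_seq_inv_INR_shift k : is_lim_seq (fun n => / INR (n + S k)) 0.
Proof.
  apply (is_lim_seq_incr_n (fun n => / INR n) (S k)).
  replace (Finite 0) with (Rbar_inv p_infty) by reflexivity.
  apply is_lim_seq_inv; [apply is_lim_seq_INR | discriminate].
Qed.

Lemma is_series_0 : is_series (fun _ : nat => 0) 0.
Proof.
  apply filterlim_ext with (fun _ => 0); [|apply filterlim_const].
  intros n. rewrite sum_n_Reals. induction n as [|n IH]; simpl; [|rewrite <- IH]; ring.
Qed.

Lemma is_lim_seq_of_abs_sub_le (u eps : nat -> R) (l : R) :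
  (forall n, Rabs (u n - l) <= eps n) -> is_lim_seq eps 0 -> is_lim_seq u l.
Proof.
  intros Hle Heps.
  assert (H0 : is_lim_seq (fun n => u n - l) 0).
  { apply is_lim_seq_abs_0, (is_lim_seq_le_le (fun _ => 0) _ eps);
      [|apply is_lim_seq_const|exact Heps].
    intros n. split; [apply Rabs_pos|apply Hle]. }
  apply (is_lim_seq_ext (fun n => (u n - l) + l)); [intros; ring|].
  replace (Finite l) with (Rbar_plus 0 l) by (simpl; f_equal; ring).
  apply is_lim_seq_plus'; [exact H0|apply is_lim_seq_const].
Qed.

Lemma is_series_of_sum_f_R0 (a : nat -> R) (l : R) :
  is_lim_seq (fun N => sum_f_R0 a N) l -> is_series a l.
Proof.
  intros H. apply (is_lim_seq_ext _ _ _ (fun n => eq_sym (sum_n_Reals a n))) in H. exact H.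
Qed.

Lemma is_series_telescope (f : nat -> R) :
  is_lim_seq f 0 -> is_series (fun n => f n - f (S n)) (f 0%nat).
Proof.
  intros Hf. apply is_series_of_sum_f_R0.
  apply (is_lim_seq_ext (fun N => f 0%nat - f (S N))).
  - intros N. induction N as [|N IH]; [reflexivity|]. rewrite tech5, <- IH. ring.
  - replace (Finite (f 0%nat)) with (Rbar_minus (f 0%nat) 0) by (simpl; f_equal; ring).
    apply is_lim_seq_minus'; [apply is_lim_seq_const|apply (is_lim_seq_incr_1 f), Hf].
Qed.

Lemma is_lim_seq_inv_INR_plus c : 0 < c -> is_lim_seq (fun n => / (INR n + c)) 0.
Proof.
  intros Hc. replace (Finite 0) with (Rbar_inv p_infty) by reflexivity.
  apply is_lim_seq_inv; [|discriminate].
  eapply is_lim_seq_plus; [apply is_lim_seq_INR|apply is_lim_seq_const|reflexivity].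
Qed.

Lemma sum_f_R0_ge_last f n : (forall k, 0 <= f k) -> f n <= sum_f_R0 f n.
Proof.
  intros H. destruct n as [|n]; [simpl; lra|].
  rewrite tech5. pose proof (cond_pos_sum f n H). lra.
Qed.

Lemma is_RInt_of_derive (F f : R -> R) a b :
  (forall t, is_derive F t (f t)) -> (forall t, ex_derive f t) -> is_RInt f a b (F b - F a).
Proof.
  intros HF Hf. apply (is_RInt_derive F f); [auto|].
  intros t _. apply (ex_derive_continuous (K := R_AbsRing) (V := R_NormedModule)), Hf.
Qed.

Lemma is_RInt_sum_f_R0 (f : nat -> R -> R) (I : nat -> R) a b N :
  (forall n, is_RInt (f n) a b (I n)) ->
  is_RInt (fun t => sum_f_R0 (fun n => f n t) N) a b (sum_f_R0 I N).
Proof.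
  intros H. induction N as [|N IH]; [exact (H 0%nat)|].
  apply (is_RInt_ext (fun t => sum_f_R0 (fun n => f n t) N + f (S N) t));
    [intros; reflexivity|].
  apply (is_RInt_plus (fun t => sum_f_R0 (fun n => f n t) N)); [exact IH|apply H].
Qed.

Lemma exp_minus_1_neq_0 z : z <> 0 -> exp z - 1 <> 0.
Proof. intros H E. apply H, exp_inv. rewrite exp_0. lra. Qed.

Lemma exp_pow_INR a m : exp a ^ m = exp (INR m * a).
Proof.
  induction m as [|m IH]; [simpl; rewrite Rmult_0_l, exp_0; reflexivity|].
  simpl pow. rewrite IH, <- exp_plus, S_INR. f_equal. ring.
Qed.

Definition delta0 (n : nat) : R := if Nat.eqb n 0 then 1 else 0.

Lemma is_pseries_delta0 z : is_pseries delta0 z 1.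
Proof.
  apply is_pseries_R, is_series_decr_1.
  match goal with
  | |- is_series _ ?l => replace l with 0 by (unfold delta0, plus, opp; simpl; ring)
  end.
  apply (is_series_ext (fun _ => 0)); [|exact is_series_0].
  intros n. unfold delta0. simpl. ring.
Qed.

Lemma CV_radius_ge_of_bounded a (r M : R) :
  (forall n, Rabs (a n * r ^ n) <= M) -> Rbar_le r (CV_radius a).
Proof. intros H. apply (proj1 (CV_radius_bounded a)). exists M. exact H. Qed.

Lemma lt_CV_radius_of_le a (r z : R) :
  Rbar_le r (CV_radius a) -> Rabs z < r -> Rbar_lt (Rabs z) (CV_radius a).
Proof. intros H1 H2. eapply Rbar_lt_le_trans; [|exact H1]. exact H2. Qed.

Lemma Derive_n_at_0_of_PSeries a n (r : R) (f : R -> R) :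
  0 < r -> Rbar_le r (CV_radius a) -> (forall z, Rabs z < r -> f z = PSeries a z) ->
  Derive_n f n 0 = INR (Factorial.fact n) * a n.
Proof.
  intros Hr Ha Hf.
  rewrite (Derive_n_ext_loc _ (PSeries a)).
  - rewrite Derive_n_PSeries.
    + rewrite PSeries_0. unfold PS_derive_n. simpl. field.
    + rewrite Rabs_R0. eapply Rbar_lt_le_trans; [|exact Ha]. exact Hr.
  - exists (mkposreal r Hr). intros t Ht. apply Hf.
    change (Rabs (t - 0) < r) in Ht. rewrite Rminus_0_r in Ht. exact Ht.
Qed.

(** * The Bernoulli power series *)

Definition exp_coef (n : nat) : R := / INR (Factorial.fact (S n)).

(* [bern_table n] memoises [bern_coef 0 .. bern_coef n], which makes the
   recursion "Cauchy product of [bern_coef] and [exp_coef] is [delta0]"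
   structural. *)
Fixpoint bern_table (n : nat) : nat -> R :=
  match n with
  | O => fun _ => 1
  | S m => fun k => if Nat.leb k m then bern_table m k
                    else - sum_f_R0 (fun j => bern_table m j * exp_coef (S m - j)) m
  end.

Definition bern_coef (n : nat) : R := bern_table n n.

Lemma bern_table_stable m k : (k <= m)%nat -> bern_table m k = bern_coef k.
Proof.
  induction m as [|m IH]; intros Hk.
  - now replace k with 0%nat by lia.
  - destruct (Nat.eq_dec k (S m)) as [->|Hne]; [reflexivity|].
    simpl. replace (Nat.leb k m) with true by (symmetry; apply Nat.leb_le; lia).
    apply IH; lia.
Qed.

Lemma bern_coef_0 : bern_coef 0 = 1.
Proof. reflexivity. Qed.

Lemma bern_coef_S m :
  bern_coef (S m) = - sum_f_R0 (fun j => bern_coef j * exp_coef (S m - j)) m.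
Proof.
  change (bern_coef (S m)) with (if Nat.leb (S m) m then bern_table m (S m)
    else - sum_f_R0 (fun j => bern_table m j * exp_coef (S m - j)) m).
  replace (Nat.leb (S m) m) with false by (symmetry; apply Nat.leb_gt; lia).
  f_equal. apply sum_eq. intros i Hi. now rewrite bern_table_stable.
Qed.

Lemma exp_coef_0 : exp_coef 0 = 1.
Proof. unfold exp_coef. simpl. lra. Qed.

Lemma bern_coef_1 : bern_coef 1 = - / 2.
Proof. rewrite bern_coef_S. simpl. rewrite bern_coef_0. unfold exp_coef. simpl. field. Qed.

Lemma PS_mult_bern_exp n : PS_mult bern_coef exp_coef n = delta0 n.
Proof.
  unfold PS_mult, delta0. destruct n as [|m].
  - simpl. rewrite exp_coef_0, bern_coef_0. ring.
  - rewrite tech5, Nat.sub_diag, exp_coef_0, bern_coef_S. simpl. ring.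
Qed.

Lemma exp_coef_pos n : 0 < exp_coef n.
Proof. apply Rinv_0_lt_compat, fact_pos. Qed.

Lemma exp_coef_S n : exp_coef (S n) = exp_coef n / INR (S (S n)).
Proof.
  unfold exp_coef. change (Factorial.fact (S (S n))) with (S (S n) * Factorial.fact (S n))%nat.
  rewrite mult_INR.
  pose proof (fact_pos (S n)). field. split; [lra|apply not_0_INR; lia].
Qed.

Lemma exp_coef_le n : exp_coef n <= (/ 2) ^ n.
Proof.
  induction n as [|n IH]; [rewrite exp_coef_0; simpl; lra|].
  rewrite exp_coef_S. simpl pow. pose proof (exp_coef_pos n).
  assert (2 <= INR (S (S n))) by (rewrite !S_INR; pose proof (pos_INR n); lra).
  unfold Rdiv. rewrite Rmult_comm.
  apply Rmult_le_compat; try lra; [left; apply Rinv_0_lt_compat; lra|].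
  apply Rinv_le_contravar; lra.
Qed.

Lemma sum_geom_half m : sum_f_R0 (fun j => (/ 2) ^ (S m - j)) m = 1 - (/ 2) ^ S m.
Proof.
  induction m as [|m IH]; [simpl; lra|].
  rewrite tech5, (sum_eq _ (fun j => (/ 2) ^ (S m - j) * / 2)).
  - rewrite <- scal_sum, IH. replace (S (S m) - S m)%nat with 1%nat by lia. simpl. lra.
  - intros i Hi. replace (S (S m) - i)%nat with (S (S m - i)) by lia. simpl. ring.
Qed.

Lemma bern_coef_abs_le_1 n : Rabs (bern_coef n) <= 1.
Proof.
  induction n as [n IH] using (well_founded_induction Wf_nat.lt_wf).
  destruct n as [|m]; [rewrite bern_coef_0, Rabs_R1; lra|].
  rewrite bern_coef_S, Rabs_Ropp.
  eapply Rle_trans; [apply sum_f_R0_triangle|].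
  apply Rle_trans with (sum_f_R0 (fun j => (/ 2) ^ (S m - j)) m).
  - apply sum_Rle. intros j Hj. rewrite Rabs_mult, (Rabs_pos_eq (exp_coef _))
      by (left; apply exp_coef_pos).
    rewrite <- (Rmult_1_l ((/ 2) ^ (S m - j))).
    pose proof (exp_coef_pos (S m - j)).
    apply Rmult_le_compat; [apply Rabs_pos|lra|apply IH; lia|apply exp_coef_le].
  - rewrite sum_geom_half. pose proof (pow_lt (/ 2) (S m)). lra.
Qed.

Lemma CV_radius_bern_ge_1 : Rbar_le 1 (CV_radius bern_coef).
Proof.
  apply CV_radius_ge_of_bounded with 1. intros n.
  rewrite pow1, Rmult_1_r. apply bern_coef_abs_le_1.
Qed.

Lemma CV_radius_exp_coef : CV_radius exp_coef = p_infty.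
Proof.
  apply CV_radius_infinite_DAlembert; [intros n; pose proof (exp_coef_pos n); lra|].
  apply is_lim_seq_ext with (fun n => / INR (n + 2)); [|apply is_lim_seq_inv_INR_shift].
  intros n. rewrite exp_coef_S. pose proof (exp_coef_pos n).
  assert (0 < INR (S (S n))) by (apply lt_0_INR; lia).
  rewrite Rabs_pos_eq by (left; apply Rdiv_lt_0_compat; [apply Rdiv_lt_0_compat|]; lra).
  replace (n + 2)%nat with (S (S n)) by lia. field. lra.
Qed.

Lemma is_pseries_exp_coef z : z <> 0 -> is_pseries exp_coef z ((exp z - 1) / z).
Proof.
  intros Hz. pose proof (is_exp_Reals z) as H.
  apply (is_pseries_decr_1 _ _ (/ z)) in H; [|change (/ z * z = 1); field; exact Hz].
  unfold PS_decr_1 in H. simpl in H. rewrite Rinv_1 in H.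
  replace ((exp z - 1) / z) with (/ z * (exp z - 1)) by (field; exact Hz). exact H.
Qed.

Lemma bern_gen_nz z : z <> 0 -> bern_gen z = z / (exp z - 1).
Proof. intros H. unfold bern_gen. now destruct (Req_EM_T z 0). Qed.

Lemma bern_gen_0 : bern_gen 0 = 1.
Proof. unfold bern_gen. now destruct (Req_EM_T 0 0). Qed.

Lemma bern_gen_PSeries z :
  Rbar_lt (Rabs z) (CV_radius bern_coef) -> bern_gen z = PSeries bern_coef z.
Proof.
  intros Hz. destruct (Req_EM_T z 0) as [->|Hz0]; [now rewrite PSeries_0, bern_gen_0|].
  assert (He : Rbar_lt (Rabs z) (CV_radius exp_coef)) by (now rewrite CV_radius_exp_coef).
  pose proof (is_pseries_mult _ _ _ _ _ (PSeries_correct _ _ (CV_radius_inside _ _ Hz))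
                (is_pseries_exp_coef z Hz0) Hz He) as H.
  apply is_pseries_ext with (b := delta0) in H; [|apply PS_mult_bern_exp].
  assert (H1 : PSeries bern_coef z * ((exp z - 1) / z) = 1).
  { rewrite <- (is_pseries_unique _ _ _ H). exact (is_pseries_unique _ _ _ (is_pseries_delta0 z)). }
  assert (Hexp : exp z - 1 <> 0) by (intro E; rewrite E in H1; unfold Rdiv in H1; lra).
  rewrite bern_gen_nz by exact Hz0.
  apply (Rmult_eq_reg_r ((exp z - 1) / z)).
  - rewrite H1. field. tauto.
  - unfold Rdiv. apply Rmult_integral_contrapositive. split; [|apply Rinv_neq_0_compat]; tauto.
Qed.

Lemma Bernoulli_bern_coef n : Bernoulli n = INR (Factorial.fact n) * bern_coef n.
Proof.
  apply (Derive_n_at_0_of_PSeries _ _ 1); [lra|exact CV_radius_bern_ge_1|].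
  intros z Hz. apply bern_gen_PSeries.
  eapply lt_CV_radius_of_le; [exact CV_radius_bern_ge_1|exact Hz].
Qed.

(** * Radius of convergence [2 PI] *)

(* If [phi' = (1 + s phi^2) / 2] then [phi^(n) = sum_j riccati_coef s n j * phi^j];
   [s = 1] gives [tan (z/2)] and [s = -1] gives [tanh (z/2)]. *)
Fixpoint riccati_coef (s : R) (n : nat) : nat -> R :=
  match n with
  | O => fun j => if Nat.eqb j 1 then 1 else 0
  | S m => fun j =>
      (INR (S j) * riccati_coef s m (S j) + s * (INR (j - 1) * riccati_coef s m (j - 1))) / 2
  end.

Lemma riccati_coef_high s n j : (S n < j)%nat -> riccati_coef s n j = 0.
Proof.
  revert j; induction n as [|n IH]; intros j Hj; simpl.
  - destruct (Nat.eqb_spec j 1); [lia|reflexivity].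
  - rewrite (IH (S j)), (IH (j - 1)%nat) by lia. lra.
Qed.

Lemma sum_shift_pred q X N :
  sum_f_R0 (fun i => INR (S i) * q (S i) * X ^ i) N
  = sum_f_R0 (fun j => INR j * q j * X ^ pred j) (S N).
Proof.
  induction N as [|N IH]; [simpl; ring|].
  now rewrite tech5, IH, (tech5 _ (S N)).
Qed.

Lemma sum_shift_succ q X N :
  sum_f_R0 (fun i => INR (i - 1) * q (i - 1)%nat * X ^ i) (S N)
  = sum_f_R0 (fun j => INR j * q j * X ^ S j) N.
Proof.
  induction N as [|N IH]; [simpl; ring|].
  now rewrite tech5, IH, (tech5 _ N).
Qed.

Lemma sum_riccati_step s q X N : q (S N) = 0 -> q (S (S N)) = 0 ->
  sum_f_R0 (fun j => q j * (INR j * ((1 + s * X ^ 2) / 2) * X ^ pred j)) N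
  = sum_f_R0 (fun i =>
      (INR (S i) * q (S i) + s * (INR (i - 1) * q (i - 1)%nat)) / 2 * X ^ i) (S N).
Proof.
  intros H1 H2.
  transitivity (sum_f_R0 (fun i => INR (S i) * q (S i) * X ^ i * / 2) (S N)
     + sum_f_R0 (fun i => INR (i - 1) * q (i - 1)%nat * X ^ i * (s / 2)) (S N));
    [|rewrite <- sum_plus; apply sum_eq; intros; field].
  rewrite <- !scal_sum, sum_shift_pred, sum_shift_succ, !tech5, H1, H2.
  rewrite (sum_eq _ (fun j => INR j * q j * X ^ pred j * / 2 + INR j * q j * X ^ S j * (s / 2))).
  - rewrite sum_plus, <- !scal_sum. ring.
  - intros [|j] _; simpl; field.
Qed.

Lemma is_derive_sum_pow_comp (phi : R -> R) z dphi q N : is_derive phi z dphi ->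
  is_derive (fun t => sum_f_R0 (fun j => q j * phi t ^ j) N) z
            (sum_f_R0 (fun j => q j * (INR j * dphi * phi z ^ pred j)) N).
Proof.
  intros Hd. induction N as [|N IH].
  - apply is_derive_scal, (is_derive_pow phi 0 z dphi Hd).
  - apply (is_derive_plus (fun t => sum_f_R0 (fun j => q j * phi t ^ j) N)
                          (fun t => q (S N) * phi t ^ S N)); [exact IH|].
    apply is_derive_scal, is_derive_pow, Hd.
Qed.

Section Riccati.

Variables (s : R) (phi : R -> R) (lo hi : R).
Hypothesis phi_riccati :
  forall z, lo < z < hi -> is_derive phi z ((1 + s * phi z ^ 2) / 2).

Definition riccati_poly (n : nat) (z : R) : R :=
  sum_f_R0 (fun j => riccati_coef s n j * phi z ^ j) (S n).

Lemma is_derive_riccati_poly n z :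
  lo < z < hi -> is_derive (riccati_poly n) z (riccati_poly (S n) z).
Proof.
  intros Hz. unfold riccati_poly.
  replace (sum_f_R0 _ (S (S n))) with (sum_f_R0 (fun j =>
     riccati_coef s n j * (INR j * ((1 + s * phi z ^ 2) / 2) * phi z ^ pred j)) (S n)).
  - apply is_derive_sum_pow_comp, phi_riccati, Hz.
  - apply sum_riccati_step; apply riccati_coef_high; lia.
Qed.

Lemma locally_in_interval z : lo < z < hi -> locally z (fun t => lo < t < hi).
Proof. intros Hz. apply (locally_interval _ z lo hi); tauto. Qed.

Lemma Derive_n_riccati n z : lo < z < hi -> Derive_n phi n z = riccati_poly n z.
Proof.
  revert z; induction n as [|n IH]; intros z Hz.
  - unfold riccati_poly. simpl. ring.
  - simpl. rewrite (Derive_ext_loc _ (riccati_poly n)).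
    + apply is_derive_unique, is_derive_riccati_poly, Hz.
    + eapply filter_imp; [|apply locally_in_interval, Hz]. exact IH.
Qed.

Lemma ex_derive_n_riccati n z : lo < z < hi -> ex_derive_n phi n z.
Proof.
  destruct n as [|n]; intros Hz; [exact I|].
  apply ex_derive_ext_loc with (riccati_poly n).
  - eapply filter_imp; [|apply locally_in_interval, Hz].
    intros t Ht. symmetry. now apply Derive_n_riccati.
  - eexists. apply is_derive_riccati_poly, Hz.
Qed.

End Riccati.

Lemma riccati_coef_dominated n j :
  0 <= riccati_coef 1 n j /\ Rabs (riccati_coef (-1) n j) <= riccati_coef 1 n j.
Proof.
  revert j; induction n as [|n IH]; intros j; cbn [riccati_coef].
  - destruct (Nat.eqb j 1); rewrite ?Rabs_R1, ?Rabs_R0; lra.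
  - destruct (IH (S j)) as [A1 A2], (IH (j - 1)%nat) as [B1 B2].
    pose proof (pos_INR (S j)). pose proof (pos_INR (j - 1)).
    pose proof (Rabs_triang (INR (S j) * riccati_coef (-1) n (S j))
                            (-1 * (INR (j - 1) * riccati_coef (-1) n (j - 1)))).
    rewrite !Rabs_mult, Rabs_m1, (Rabs_pos_eq (INR (S j))), (Rabs_pos_eq (INR (j - 1))) in H1
      by lra.
    unfold Rdiv. rewrite Rabs_mult, (Rabs_pos_eq (/ 2)) by lra.
    split; [|apply Rmult_le_compat_r; [lra|]].
    all: nra.
Qed.

Lemma riccati_poly_at_zero s phi n z : phi z = 0 -> riccati_poly s phi n z = riccati_coef s n 0.
Proof.
  intros H. unfold riccati_poly. rewrite H, decomp_sum by lia. simpl pred.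
  rewrite (sum_eq _ (fun _ => 0)) by (intros i _; rewrite pow_i by lia; ring).
  rewrite sum_cte. simpl. ring.
Qed.

Lemma riccati_poly_nonneg phi n z : 0 <= phi z -> 0 <= riccati_poly 1 phi n z.
Proof.
  intros H. apply cond_pos_sum. intros j.
  apply Rmult_le_pos; [apply riccati_coef_dominated|apply pow_le, H].
Qed.

Definition tan_half (z : R) : R := tan (z / 2).
Definition tanh_half (z : R) : R := 1 - 2 / (exp z + 1).

Lemma tan_half_riccati z : -PI < z < PI -> is_derive tan_half z ((1 + 1 * tan_half z ^ 2) / 2).
Proof.
  intros Hz. unfold tan_half.
  assert (Hc : cos (z / 2) <> 0) by (assert (0 < cos (z / 2)) by (apply cos_gt_0; lra); lra).
  replace ((1 + 1 * tan (z / 2) ^ 2) / 2) with (scal (/ 2) (tan (z / 2) ^ 2 + 1))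
    by (unfold scal; simpl; unfold mult; simpl; field).
  apply (is_derive_comp tan (fun t => t / 2)); [apply is_derive_tan, Hc|].
  auto_derive; [exact I|field].
Qed.

Lemma tanh_half_riccati z : is_derive tanh_half z ((1 + -1 * tanh_half z ^ 2) / 2).
Proof.
  unfold tanh_half. pose proof (exp_pos z).
  auto_derive; [lra|field; lra].
Qed.

Lemma tan_half_0 : tan_half 0 = 0.
Proof. unfold tan_half. replace (0 / 2) with 0 by field. apply tan_0. Qed.

Lemma tanh_half_0 : tanh_half 0 = 0.
Proof. unfold tanh_half. rewrite exp_0. field. Qed.

Lemma tan_half_nonneg z : 0 <= z < PI -> 0 <= tan_half z.
Proof.
  intros Hz. apply Rdiv_le_0_compat; [apply sin_ge_0|apply cos_gt_0]; lra.
Qed.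

(* All Taylor coefficients of [tan (z/2)] at 0 are nonnegative, and so is the
   Lagrange remainder on [0, PI), so each term is below the value. *)
Lemma tan_half_taylor_term_le n s :
  0 < s < PI -> s ^ n / INR (Factorial.fact n) * riccati_coef 1 n 0 <= tan_half s.
Proof.
  intros Hs. pose proof PI_RGT_0.
  assert (HD : forall m z, -PI < z < PI -> Derive_n tan_half m z = riccati_poly 1 tan_half m z)
    by (intros m z; apply (Derive_n_riccati 1 tan_half (-PI) PI), tan_half_riccati).
  assert (Hpow : forall m, 0 <= s ^ m / INR (Factorial.fact m))
    by (intros m; apply Rdiv_le_0_compat; [apply pow_le; lra|apply fact_pos]).
  destruct (Taylor_Lagrange tan_half n 0 s) as [zeta [Hzeta E]]; [lra| |].
  { intros t Ht k _.
    apply (ex_derive_n_riccati 1 tan_half (-PI) PI); [apply tan_half_riccati|lra]. }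
  rewrite E, Rminus_0_r, HD by lra.
  assert (Hterm : forall m, 0 <= s ^ m / INR (Factorial.fact m) * Derive_n tan_half m 0).
  { intros m. rewrite HD, riccati_poly_at_zero by (apply tan_half_0 || lra).
    apply Rmult_le_pos; [apply Hpow|apply riccati_coef_dominated]. }
  pose proof (sum_f_R0_ge_last _ n Hterm) as Hlast. cbv beta in Hlast.
  rewrite HD, riccati_poly_at_zero in Hlast by (apply tan_half_0 || lra).
  assert (0 <= riccati_poly 1 tan_half (S n) zeta)
    by (apply riccati_poly_nonneg, tan_half_nonneg; lra).
  pose proof (Hpow (S n)). nra.
Qed.

Lemma bern_gen_sub_double z : z <> 0 -> bern_gen z - bern_gen (2 * z) = z / (exp z + 1).
Proof.
  intros H. rewrite !bern_gen_nz by lra.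
  replace (2 * z) with (z + z) by ring. rewrite exp_plus.
  pose proof (exp_minus_1_neq_0 z H). pose proof (exp_pos z).
  replace (exp z * exp z - 1) with ((exp z - 1) * (exp z + 1)) by ring.
  field. split; lra.
Qed.

Lemma is_series_bern_gen w : Rabs w < 1 -> is_series (fun n => bern_coef n * w ^ n) (bern_gen w).
Proof.
  intros Hw. apply is_pseries_R.
  assert (Hr : Rbar_lt (Rabs w) (CV_radius bern_coef))
    by (eapply lt_CV_radius_of_le; [exact CV_radius_bern_ge_1|exact Hw]).
  rewrite bern_gen_PSeries by exact Hr. apply PSeries_correct, CV_radius_inside, Hr.
Qed.

(* From [tanh (z/2) = 1 + (2 bern_gen (2 z) - 2 bern_gen z) / z]. *)
Definition tanh_coef (n : nat) : R := (2 ^ (n + 2) - 2) * bern_coef (S n) + delta0 n.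

Lemma is_pseries_tanh_half z : z <> 0 -> Rabs z < 1 / 2 -> is_pseries tanh_coef z (tanh_half z).
Proof.
  intros Hz Hz2.
  assert (Hdiff : is_series (fun n => (2 ^ (n + 1) - 2) * bern_coef n * z ^ n)
                            (2 * bern_gen (2 * z) - 2 * bern_gen z)).
  { apply (is_series_ext (fun n => 2 * (bern_coef n * (2 * z) ^ n) - 2 * (bern_coef n * z ^ n))).
    - intros n. rewrite Rpow_mult_distr, pow_add. simpl. ring.
    - apply (is_series_minus (fun n => 2 * (bern_coef n * (2 * z) ^ n))).
      + apply (is_series_scal 2 (fun n => bern_coef n * (2 * z) ^ n)), is_series_bern_gen.
        rewrite Rabs_mult, Rabs_pos_eq; lra.
      + apply (is_series_scal 2 (fun n => bern_coef n * z ^ n)), is_series_bern_gen. lra. }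
  assert (Hshift : is_series (fun n => (2 ^ (S n + 1) - 2) * bern_coef (S n) * z ^ S n)
                             (2 * bern_gen (2 * z) - 2 * bern_gen z)).
  { apply (is_series_incr_1 (fun n => (2 ^ (n + 1) - 2) * bern_coef n * z ^ n)).
    match goal with |- is_series _ ?l => replace l with (2 * bern_gen (2 * z) - 2 * bern_gen z)
      by (unfold plus; simpl; ring) end. exact Hdiff. }
  apply (is_series_scal (/ z)) in Hshift.
  pose proof (proj1 (is_pseries_R _ _ _) (is_pseries_delta0 z)) as Hdelta.
  apply is_pseries_R.
  apply (is_series_ext (fun n => (2 ^ (n + 2) - 2) * bern_coef (S n) * z ^ n + delta0 n * z ^ n));
    [intros n; unfold tanh_coef; simpl; ring|].
  replace (tanh_half z) with (/ z * (2 * bern_gen (2 * z) - 2 * bern_gen z) + 1).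
  - apply (is_series_plus _ (fun n => delta0 n * z ^ n)); [|exact Hdelta].
    eapply is_series_ext; [|exact Hshift].
    intros n. cbv beta. replace (S n + 1)%nat with (n + 2)%nat by lia.
    change (/ z * ((2 ^ (n + 2) - 2) * bern_coef (S n) * (z * z ^ n))
            = (2 ^ (n + 2) - 2) * bern_coef (S n) * z ^ n).
    field. exact Hz.
  - unfold tanh_half.
    replace (2 * bern_gen (2 * z) - 2 * bern_gen z) with (-2 * (bern_gen z - bern_gen (2 * z)))
      by ring.
    rewrite bern_gen_sub_double by exact Hz. pose proof (exp_pos z). field. lra.
Qed.

Lemma tanh_coef_abs_le_pow4 n : Rabs (tanh_coef n) <= 5 * 4 ^ n.
Proof.
  unfold tanh_coef. pose proof (bern_coef_abs_le_1 (S n)).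
  assert (H4 : 2 ^ (n + 2) = 4 * 2 ^ n) by (rewrite pow_add; simpl; ring).
  assert (H2 : 1 <= 2 ^ n <= 4 ^ n).
  { split; [apply pow_R1_Rle; lra|apply pow_incr; lra]. }
  assert (Hd : Rabs (delta0 n) <= 1) by (unfold delta0; destruct (Nat.eqb n 0);
    rewrite ?Rabs_R1, ?Rabs_R0; lra).
  eapply Rle_trans; [apply Rabs_triang|]. rewrite Rabs_mult, (Rabs_pos_eq (_ - 2)) by lra.
  pose proof (Rabs_pos (bern_coef (S n))). nra.
Qed.

Lemma CV_radius_tanh_coef : Rbar_le (/ 4) (CV_radius tanh_coef).
Proof.
  apply CV_radius_ge_of_bounded with 5. intros n.
  rewrite Rabs_mult, (Rabs_pos_eq ((/ 4) ^ n)) by (apply pow_le; lra).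
  replace 5 with (5 * 4 ^ n * (/ 4) ^ n)
    by (rewrite Rmult_assoc, <- Rpow_mult_distr, Rinv_r, pow1; lra).
  apply Rmult_le_compat_r; [apply pow_le; lra|apply tanh_coef_abs_le_pow4].
Qed.

Lemma tanh_half_PSeries z : Rabs z < 1 / 2 -> tanh_half z = PSeries tanh_coef z.
Proof.
  intros Hz. destruct (Req_EM_T z 0) as [->|Hz0].
  - rewrite PSeries_0, tanh_half_0. unfold tanh_coef, delta0. simpl. rewrite bern_coef_1. field.
  - symmetry. apply is_pseries_unique, is_pseries_tanh_half; assumption.
Qed.

Lemma tanh_coef_abs_le n s : 0 < s < PI -> Rabs (tanh_coef n) * s ^ n <= tan_half s.
Proof.
  intros Hs. pose proof (fact_pos n).
  assert (E : INR (Factorial.fact n) * tanh_coef n = riccati_coef (-1) n 0).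
  { rewrite <- (Derive_n_at_0_of_PSeries tanh_coef n (/ 4) tanh_half);
      [|lra|exact CV_radius_tanh_coef|intros z Hz; apply tanh_half_PSeries; lra].
    rewrite (Derive_n_riccati (-1) tanh_half (-1) 1), riccati_poly_at_zero;
      [reflexivity|apply tanh_half_0|intros; apply tanh_half_riccati|lra]. }
  destruct (riccati_coef_dominated n 0) as [_ Hdom].
  assert (Hpow : 0 <= s ^ n / INR (Factorial.fact n))
    by (apply Rdiv_le_0_compat; [apply pow_le; lra|exact H]).
  eapply Rle_trans; [|apply (tan_half_taylor_term_le n s Hs)].
  replace (Rabs (tanh_coef n) * s ^ n)
    with (s ^ n / INR (Factorial.fact n) * Rabs (riccati_coef (-1) n 0))
    by (rewrite <- E, Rabs_mult, (Rabs_pos_eq (INR _)); [field|]; lra).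
  apply Rmult_le_compat_l; [exact Hpow|exact Hdom].
Qed.

Lemma bern_coef_term_le n s : 0 < s < PI -> (2 <= n)%nat ->
  Rabs (bern_coef n) * (2 * s) ^ n <= s * tan_half s.
Proof.
  intros Hs Hn. destruct n as [|[|k]]; [lia|lia|].
  pose proof (tanh_coef_abs_le (S k) s Hs) as Hc.
  unfold tanh_coef, delta0 in Hc. simpl Nat.eqb in Hc.
  set (P := 2 ^ S (S k)). set (A := Rabs (bern_coef (S (S k))) * s ^ S k).
  assert (HP : 2 <= P) by (apply (Rle_trans _ (2 ^ 1)); [simpl; lra|apply Rle_pow; [lra|lia]]).
  assert (HA : (2 * P - 2) * A <= tan_half s).
  { replace (2 ^ (S k + 2)) with (2 * P) in Hc by (unfold P; rewrite pow_add; simpl; ring).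
    rewrite Rplus_0_r, Rabs_mult, (Rabs_pos_eq (2 * P - 2)) in Hc by lra.
    unfold A. lra. }
  assert (0 <= A) by (apply Rmult_le_pos; [apply Rabs_pos|apply pow_le; lra]).
  replace (Rabs (bern_coef (S (S k))) * (2 * s) ^ S (S k)) with (s * (P * A))
    by (unfold P, A; rewrite Rpow_mult_distr; simpl; ring).
  apply Rmult_le_compat_l; nra.
Qed.

Lemma CV_radius_bern_ge s : 0 < s < PI -> Rbar_le (2 * s) (CV_radius bern_coef).
Proof.
  intros Hs. pose proof (tan_half_nonneg s ltac:(lra)).
  apply CV_radius_ge_of_bounded with (1 + s + s * tan_half s). intros n.
  rewrite Rabs_mult, (Rabs_pos_eq ((2 * s) ^ n)) by (apply pow_le; lra).
  destruct n as [|[|n]].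
  - rewrite bern_coef_0, Rabs_R1. simpl. nra.
  - rewrite bern_coef_1, Rabs_Ropp, Rabs_pos_eq by lra. simpl. nra.
  - pose proof (bern_coef_term_le (S (S n)) s Hs ltac:(lia)). nra.
Qed.

Lemma CV_radius_bern_gt r : 0 <= r < 2 * PI -> Rbar_lt r (CV_radius bern_coef).
Proof.
  intros Hr. eapply Rbar_lt_le_trans; [|apply (CV_radius_bern_ge ((r / 2 + PI) / 2)); lra].
  simpl. lra.
Qed.

(** * The series as an integral *)

Definition exp_taylor_at (y : R) (n : nat) (t : R) : R :=
  exp t * sum_f_R0 (fun j => (y - t) ^ j / INR (Factorial.fact j)) n.

Lemma is_derive_exp_mul_pow (m : nat) (c y t : R) :
  is_derive (fun u => exp u * (y - u) ^ m * c) t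
            (exp t * (y - t) ^ m * c - INR m * exp t * (y - t) ^ pred m * c).
Proof. auto_derive; [exact I|]. unfold Rminus. ring. Qed.

Lemma is_derive_exp_taylor_at (y : R) (n : nat) (t : R) :
  is_derive (exp_taylor_at y n) t (exp t * (y - t) ^ n / INR (Factorial.fact n)).
Proof.
  induction n as [|n IH].
  - unfold exp_taylor_at. simpl. auto_derive; [exact I|field].
  - assert (HS : INR (Factorial.fact (S n)) = INR (S n) * INR (Factorial.fact n))
      by (rewrite <- mult_INR; reflexivity).
    pose proof (fact_pos n). pose proof (lt_0_INR (S n) ltac:(lia)).
    apply (is_derive_ext (fun u => exp_taylor_at y n u
                                   + exp u * (y - u) ^ S n * / INR (Factorial.fact (S n))));
      [intros u; unfold exp_taylor_at; rewrite tech5, Rmult_plus_distr_l;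
       unfold Rdiv; rewrite Rmult_assoc; reflexivity|].
    rewrite <- (Rplus_minus (exp t * (y - t) ^ n / INR (Factorial.fact n))
                            (exp t * (y - t) ^ S n / INR (Factorial.fact (S n)))).
    apply (is_derive_plus (exp_taylor_at y n)); [exact IH|].
    eapply is_derive_ext; [intros u; reflexivity|].
    match goal with |- is_derive _ _ ?l => replace l with
      (exp t * (y - t) ^ S n * / INR (Factorial.fact (S n))
       - INR (S n) * exp t * (y - t) ^ pred (S n) * / INR (Factorial.fact (S n))) end;
      [apply is_derive_exp_mul_pow|].
    simpl pred. rewrite HS. field. lra.
Qed.

Lemma is_RInt_Rrem y n :
  is_RInt (fun t => exp t * (y - t) ^ n / INR (Factorial.fact n)) 0 y (Rrem n y).
Proof.
  replace (Rrem n y) with (exp_taylor_at y n y - exp_taylor_at y n 0).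
  - apply is_RInt_of_derive; [apply is_derive_exp_taylor_at|].
    intros t. pose proof (fact_pos n). auto_derive. lra.
  - unfold exp_taylor_at, Rrem. rewrite Rminus_diag, Rminus_0_r, exp_0.
    assert (H0 : sum_f_R0 (fun j => 0 ^ j / INR (Factorial.fact j)) n = 1).
    { induction n as [|n IH]; [simpl; field|].
      rewrite tech5, IH, pow_i by lia. unfold Rdiv. ring. }
    rewrite H0. ring.
Qed.

Lemma is_RInt_bern_term x y n :
  is_RInt (fun t => exp t * (bern_coef n * (x * (y - t)) ^ n)) 0 y (Bernoulli n * Rrem n y * x ^ n).
Proof.
  pose proof (fact_pos n).
  apply (is_RInt_ext (fun t => bern_coef n * x ^ n * INR (Factorial.fact n)
                               * (exp t * (y - t) ^ n / INR (Factorial.fact n)))).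
  - intros t _. simpl. rewrite Rpow_mult_distr. field. lra.
  - replace (Bernoulli n * Rrem n y * x ^ n)
      with (bern_coef n * x ^ n * INR (Factorial.fact n) * Rrem n y)
      by (rewrite Bernoulli_bern_coef; ring).
    apply (is_RInt_scal (fun t => exp t * (y - t) ^ n / INR (Factorial.fact n))), is_RInt_Rrem.
Qed.

Definition bern_abs_series (r : R) (n : nat) : R := Rabs (bern_coef n) * r ^ n.

Lemma ex_series_bern_abs r : 0 <= r < 2 * PI -> ex_series (bern_abs_series r).
Proof.
  intros Hr. pose proof (CV_disk_inside bern_coef r) as H.
  rewrite Rabs_pos_eq in H by lra. specialize (H (CV_radius_bern_gt r Hr)).
  eapply ex_series_ext; [|exact H]. intros n. unfold bern_abs_series.
  rewrite Rabs_mult, (Rabs_pos_eq (r ^ n)) by (apply pow_le; lra). reflexivity.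
Qed.

Definition bern_abs_tail (r : R) (N : nat) : R :=
  Series (bern_abs_series r) - sum_f_R0 (bern_abs_series r) N.

Lemma bern_abs_tail_lim r : 0 <= r < 2 * PI -> is_lim_seq (bern_abs_tail r) 0.
Proof.
  intros Hr. pose proof (Series_correct _ (ex_series_bern_abs r Hr)) as H.
  change (is_lim_seq (sum_n (bern_abs_series r)) (Series (bern_abs_series r))) in H.
  apply (is_lim_seq_ext _ _ _ (sum_n_Reals _)) in H.
  unfold bern_abs_tail. replace 0 with (Series (bern_abs_series r) - Series (bern_abs_series r))
    by ring.
  apply is_lim_seq_minus'; [apply is_lim_seq_const|exact H].
Qed.

Lemma PSeries_bern_tail_le r u N : 0 <= u <= r -> r < 2 * PI ->
  Rabs (PSeries bern_coef u - sum_f_R0 (fun n => bern_coef n * u ^ n) N) <= bern_abs_tail r N.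
Proof.
  intros Hu Hr.
  assert (Hux : Rbar_lt (Rabs u) (CV_radius bern_coef))
    by (rewrite Rabs_pos_eq by lra; apply CV_radius_bern_gt; lra).
  pose proof (CV_disk_inside _ _ Hux) as Habs.
  pose proof (ex_series_bern_abs r ltac:(lra)) as Hr_ex.
  unfold PSeries, bern_abs_tail.
  rewrite (Series_incr_n _ (S N)), (Series_incr_n (bern_abs_series r) (S N));
    [|lia|exact Hr_ex|lia|apply ex_series_Rabs, Habs].
  simpl pred. rewrite !Rplus_minus_l.
  eapply Rle_trans;
    [apply Series_Rabs, (ex_series_incr_n (fun n => Rabs (bern_coef n * u ^ n))), Habs|].
  apply Series_le; [|apply (ex_series_incr_n (bern_abs_series r)), Hr_ex].
  intros n. split; [apply Rabs_pos|]. unfold bern_abs_series.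
  rewrite Rabs_mult, (Rabs_pos_eq (u ^ _)) by (apply pow_le; lra).
  apply Rmult_le_compat_l; [apply Rabs_pos|apply pow_incr; lra].
Qed.

Definition bern_integrand (x y t : R) : R := exp t * PSeries bern_coef (x * (y - t)).

Lemma ex_RInt_bern_integrand x y : 0 < x -> 0 < y -> x * y < 2 * PI ->
  ex_RInt (bern_integrand x y) 0 y.
Proof.
  intros Hx Hy Hxy. apply (ex_RInt_continuous (V := R_CompleteNormedModule)).
  intros t Ht. rewrite Rmin_left, Rmax_right in Ht by lra.
  apply (ex_derive_continuous (K := R_AbsRing) (V := R_NormedModule)).
  unfold bern_integrand. auto_derive.
  replace (x * (y + - t)) with (x * (y - t)) by ring.
  apply ex_derive_PSeries. rewrite Rabs_pos_eq by nra. apply CV_radius_bern_gt. nra.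
Qed.

Lemma is_series_bern_integral x y : 0 < x -> 0 < y -> x * y < 2 * PI ->
  is_series (fun n => Bernoulli n * Rrem n y * x ^ n) (RInt (bern_integrand x y) 0 y).
Proof.
  intros Hx Hy Hxy.
  pose proof (RInt_correct (V := R_CompleteNormedModule) _ _ _
                (ex_RInt_bern_integrand x y Hx Hy Hxy)) as HV.
  apply is_series_of_sum_f_R0,
    (is_lim_seq_of_abs_sub_le _ (fun N => y * (exp y * bern_abs_tail (x * y) N))).
  - intros N. set (f := fun t => sum_f_R0 (fun n => exp t * (bern_coef n * (x * (y - t)) ^ n)) N
                                  - bern_integrand x y t).
    assert (Hf : forall t, 0 <= t <= y -> norm (f t) <= exp y * bern_abs_tail (x * y) N).
    { intros t Ht. unfold f, bern_integrand. change norm with Rabs. simpl.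
      rewrite (sum_eq _ (fun n => bern_coef n * (x * (y - t)) ^ n * exp t)) by (intros; ring).
      rewrite <- scal_sum, <- Rmult_minus_distr_l, Rabs_mult, Rabs_pos_eq by (left; apply exp_pos).
      apply Rmult_le_compat; [left; apply exp_pos|apply Rabs_pos| |].
      - destruct (Req_dec t y) as [->|]; [lra|left; apply exp_increasing; lra].
      - rewrite Rabs_minus_sym. apply PSeries_bern_tail_le; nra. }
    assert (HI : is_RInt f 0 y (sum_f_R0 (fun n => Bernoulli n * Rrem n y * x ^ n) N
                                - RInt (bern_integrand x y) 0 y)).
    { apply (is_RInt_minus
               (fun t => sum_f_R0 (fun n => exp t * (bern_coef n * (x * (y - t)) ^ n)) N));
        [apply is_RInt_sum_f_R0, is_RInt_bern_term|exact HV]. }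
    pose proof (norm_RInt_le_const f 0 y _ _ ltac:(lra) Hf HI) as Hle.
    rewrite Rminus_0_r in Hle. exact Hle.
  - replace (Finite 0) with (Rbar_mult y (Rbar_mult (exp y) 0)) by (simpl; f_equal; ring).
    apply is_lim_seq_scal_l, is_lim_seq_scal_l, bern_abs_tail_lim. nra.
Qed.

(** * The integral as Lerch series *)

Lemma bern_gen_bounds u : 0 <= u -> 0 < bern_gen u <= 1.
Proof.
  intros Hu. destruct (Req_dec u 0) as [->|Hu0]; [rewrite bern_gen_0; lra|].
  rewrite bern_gen_nz by exact Hu0. pose proof (exp_ineq1 u Hu0).
  split; [apply Rdiv_lt_0_compat; lra|].
  apply (Rmult_le_reg_r (exp u - 1)); [lra|]. unfold Rdiv. rewrite Rmult_assoc, Rinv_l; lra.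
Qed.

Lemma sum_geom_exp u M :
  sum_f_R0 (fun m => u * exp (- (INR (S m) * u))) M = bern_gen u * (1 - exp (- (INR (S M) * u))).
Proof.
  destruct (Req_dec u 0) as [->|Hu0].
  - rewrite (sum_eq _ (fun _ => 0)) by (intros; cbv beta; ring).
    rewrite sum_cte, Rmult_0_r, Ropp_0, exp_0. ring.
  - rewrite bern_gen_nz by exact Hu0.
    pose proof (exp_minus_1_neq_0 u Hu0). pose proof (exp_pos u).
    induction M as [|M IH].
    + simpl sum_f_R0. replace (INR 1) with 1 by reflexivity.
      rewrite Rmult_1_l, exp_Ropp. field. split; lra.
    + rewrite tech5, IH.
      replace (- (INR (S (S M)) * u)) with (- (INR (S M) * u) + - u)
        by (rewrite (S_INR (S M)); ring).
      rewrite exp_plus, (exp_Ropp u). field. split; lra.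
Qed.

(* The [m]-th summands of the three Lerch series, in the literal shape of [LerchPhi]. *)
Definition lerch_term (x y : R) (m : nat) : R :=
  exp y / x * (1 ^ m / (INR m + / x) ^ 2) - y * (exp (- (x * y)) ^ m / (INR m + / x) ^ 1)
  - / x * (exp (- (x * y)) ^ m / (INR m + / x) ^ 2).

Definition geom_kernel (x y : R) (m : nat) (t : R) : R :=
  exp t * (x * (y - t)) * exp (- (INR m * (x * (y - t)))).

Lemma is_RInt_geom_kernel x y m : 0 < x -> is_RInt (geom_kernel x y m) 0 y (lerch_term x y m).
Proof.
  intros Hx. pose proof (pos_INR m).
  assert (Ha : INR m * x + 1 <> 0) by nra.
  assert (Hb : INR m + / x <> 0) by (pose proof (Rinv_0_lt_compat x Hx); lra).
  set (G := fun t => x * exp ((INR m * x + 1) * t - INR m * x * y)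
                     * ((y - t) / (INR m * x + 1) + / (INR m * x + 1) ^ 2)).
  replace (lerch_term x y m) with (G y - G 0).
  - apply is_RInt_of_derive; [|intros t; unfold geom_kernel; auto_derive; exact I].
    intros t. unfold G, geom_kernel. auto_derive; [exact I|].
    replace (exp t * (x * (y - t)) * exp (- (INR m * (x * (y - t)))))
      with (x * (y - t) * exp ((INR m * x + 1) * t - INR m * x * y))
      by (replace ((INR m * x + 1) * t - INR m * x * y) with (t + - (INR m * (x * (y - t))))
            by ring; rewrite exp_plus; ring).
    unfold Rminus. field. exact Ha.
  - unfold G, lerch_term. rewrite pow1, exp_pow_INR.
    replace ((INR m * x + 1) * y - INR m * x * y) with y by ring.
    replace ((INR m * x + 1) * 0 - INR m * x * y) with (INR m * - (x * y)) by ring.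
    field. repeat split; lra.
Qed.

Lemma bern_integrand_sub_geom x y M t : 0 <= x * (y - t) < 2 * PI ->
  bern_integrand x y t - sum_f_R0 (fun m => geom_kernel x y (S m) t) M
  = exp t * bern_gen (x * (y - t)) * exp (- (INR (S M) * (x * (y - t)))).
Proof.
  intros Hu. unfold bern_integrand.
  rewrite <- bern_gen_PSeries by (rewrite Rabs_pos_eq by lra; apply CV_radius_bern_gt; lra).
  rewrite (sum_eq _ (fun m => x * (y - t) * exp (- (INR (S m) * (x * (y - t)))) * exp t))
    by (intros; unfold geom_kernel; ring).
  rewrite <- scal_sum, sum_geom_exp. ring.
Qed.

Lemma is_RInt_exp_decay x y K : 0 < x -> 0 < K ->
  is_RInt (fun t => exp y * exp (- (K * (x * (y - t))))) 0 y
          (exp y * ((1 - exp (- (K * (x * y)))) / (K * x))).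
Proof.
  intros Hx HK.
  set (F := fun t => exp y * exp (- (K * (x * (y - t)))) / (K * x)).
  replace (exp y * ((1 - exp (- (K * (x * y)))) / (K * x))) with (F y - F 0).
  - apply is_RInt_of_derive; [|intros t; auto_derive; exact I].
    intros t. unfold F. auto_derive; [exact I|]. unfold Rminus. field. lra.
  - unfold F. rewrite Rminus_diag, Rminus_0_r, !Rmult_0_r, Ropp_0, exp_0. field. lra.
Qed.

Lemma RInt_bern_integrand_sub_lerch_le x y M : 0 < x -> 0 < y -> x * y < 2 * PI ->
  Rabs (RInt (bern_integrand x y) 0 y - sum_f_R0 (fun m => lerch_term x y (S m)) M)
  <= exp y / x * / INR (S M).
Proof.
  intros Hx Hy Hxy. set (K := INR (S M)). assert (HK : 0 < K) by (apply lt_0_INR; lia).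
  pose proof (RInt_correct (V := R_CompleteNormedModule) _ _ _
                (ex_RInt_bern_integrand x y Hx Hy Hxy)) as HV.
  apply Rle_trans with (exp y * ((1 - exp (- (K * (x * y)))) / (K * x))).
  - apply (norm_RInt_le (fun t => bern_integrand x y t
                                  - sum_f_R0 (fun m => geom_kernel x y (S m) t) M)
             (fun t => exp y * exp (- (K * (x * (y - t))))) 0 y); [lra| | |].
    + intros t Ht. change norm with Rabs. simpl.
      assert (Hu : 0 <= x * (y - t) < 2 * PI) by (split; nra).
      rewrite bern_integrand_sub_geom by exact Hu.
      pose proof (bern_gen_bounds (x * (y - t)) (proj1 Hu)).
      pose proof (exp_pos (- (K * (x * (y - t))))).
      rewrite !Rabs_mult, !Rabs_pos_eq by (first [left; apply exp_pos | lra]).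
      apply Rmult_le_compat_r; [lra|].
      rewrite <- (Rmult_1_r (exp y)). apply Rmult_le_compat; [left; apply exp_pos|lra| |lra].
      destruct (Req_dec t y) as [->|]; [lra|left; apply exp_increasing; lra].
    + apply (is_RInt_minus (bern_integrand x y)); [exact HV|].
      apply is_RInt_sum_f_R0. intros m. apply is_RInt_geom_kernel, Hx.
    + apply is_RInt_exp_decay; assumption.
  - pose proof (exp_pos (- (K * (x * y)))). pose proof (exp_pos y).
    replace (exp y / x * / K) with (exp y * (1 / (K * x))) by (field; lra).
    apply Rmult_le_compat_l; [lra|]. unfold Rdiv.
    apply Rmult_le_compat_r; [left; apply Rinv_0_lt_compat; nra|lra].
Qed.

Lemma is_series_lerch_term_S x y : 0 < x -> 0 < y -> x * y < 2 * PI ->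
  is_series (fun m => lerch_term x y (S m)) (RInt (bern_integrand x y) 0 y).
Proof.
  intros Hx Hy Hxy. apply is_series_of_sum_f_R0.
  apply (is_lim_seq_of_abs_sub_le _ (fun M => exp y / x * / INR (S M))).
  - intros M. rewrite Rabs_minus_sym. apply RInt_bern_integrand_sub_lerch_le; assumption.
  - replace (Finite 0) with (Rbar_mult (exp y / x) 0) by (simpl; f_equal; ring).
    apply is_lim_seq_scal_l.
    apply (is_lim_seq_ext (fun n => / INR (n + 1))); [intros n; do 2 f_equal; lia|].
    apply is_lim_seq_inv_INR_shift.
Qed.

Lemma ex_series_inv_sqr_shift c : 0 < c -> ex_series (fun n => 1 ^ n / (INR n + c) ^ 2).
Proof.
  intros Hc.
  apply (ex_series_le (K := R_AbsRing) (V := R_CompleteNormedModule) _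
           (fun n => (1 + / c) * (/ (INR n + c) - / (INR (S n) + c)))).
  - intros n. change norm with Rabs. rewrite S_INR. pose proof (pos_INR n).
    set (a := INR n + c).
    assert (Ha : c <= a) by (unfold a; lra).
    rewrite Rabs_pos_eq by (apply Rdiv_le_0_compat; [rewrite pow1|apply pow_lt]; lra).
    assert (E : (1 + / c) * (/ a - / (INR n + 1 + c)) - 1 ^ n / a ^ 2
                = (a - c) / (c * a * a * (a + 1))).
    { replace (INR n + 1 + c) with (a + 1) by (unfold a; ring). rewrite pow1. field. lra. }
    assert (0 <= (a - c) / (c * a * a * (a + 1)))
      by (apply Rdiv_le_0_compat; [lra|repeat apply Rmult_lt_0_compat; lra]).
    lra.
  - eexists. apply (is_series_scal (1 + / c) (fun n => / (INR n + c) - / (INR (S n) + c))).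
    apply (is_series_telescope (fun n => / (INR n + c))), is_lim_seq_inv_INR_plus, Hc.
Qed.

Lemma ex_series_lerch_geom q c s :
  0 <= q < 1 -> 0 < c -> ex_series (fun n => q ^ n / (INR n + c) ^ s).
Proof.
  intros Hq Hc.
  apply (ex_series_le (K := R_AbsRing) (V := R_CompleteNormedModule) _
           (fun n => / c ^ s * q ^ n)).
  - intros n. change norm with Rabs. pose proof (pos_INR n).
    assert (0 < c ^ s) by (apply pow_lt; lra).
    assert (c ^ s <= (INR n + c) ^ s) by (apply pow_incr; lra).
    rewrite Rabs_pos_eq by (apply Rdiv_le_0_compat; [apply pow_le|apply pow_lt]; lra).
    unfold Rdiv. rewrite Rmult_comm. apply Rmult_le_compat_r; [apply pow_le; lra|].
    apply Rinv_le_contravar; lra.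
  - destruct (ex_series_geom q) as [l Hl]; [rewrite Rabs_pos_eq; lra|].
    exists (/ c ^ s * l). apply (is_series_scal (/ c ^ s) (fun n => q ^ n)), Hl.
Qed.

Lemma is_series_lerch_term x y : 0 < x -> 0 < y ->
  is_series (lerch_term x y)
    (exp y / x * LerchPhi 1 2 (/ x) - y * LerchPhi (exp (- (x * y))) 1 (/ x)
     - / x * LerchPhi (exp (- (x * y))) 2 (/ x)).
Proof.
  intros Hx Hy. pose proof (Rinv_0_lt_compat x Hx) as Hc.
  assert (Hq : 0 <= exp (- (x * y)) < 1).
  { split; [left; apply exp_pos|]. rewrite <- exp_0. apply exp_increasing. nra. }
  unfold lerch_term, LerchPhi.
  apply (is_series_minus (fun m => _ - _)); [apply (is_series_minus (fun m => _ * _))|];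
    apply (is_series_scal _ (fun m => _ / _)), Series_correct.
  - apply ex_series_inv_sqr_shift, Hc.
  - apply ex_series_lerch_geom; assumption.
  - apply ex_series_lerch_geom; assumption.
Qed.

Theorem mainTheorem5 (x y : R) (hx : 0 < x) (hy : 0 < y) (hxy : x * y < 2 * PI) :
  is_series (fun n : nat => Bernoulli n * Rrem n y * x ^ n)
    (exp y / x * LerchPhi 1 2 (/ x)
     - y * LerchPhi (exp (- (x * y))) 1 (/ x)
     - / x * LerchPhi (exp (- (x * y))) 2 (/ x)
     + x * (y + 1 - exp y)).
Proof.
  set (W := exp y / x * LerchPhi 1 2 (/ x) - y * LerchPhi (exp (- (x * y))) 1 (/ x)
            - / x * LerchPhi (exp (- (x * y))) 2 (/ x)).
  assert (Htail : is_series (fun m => lerch_term x y (S m)) (W - lerch_term x y 0)).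
  { apply is_series_incr_1.
    match goal with |- is_series _ ?l => replace l with W by (unfold plus; simpl; ring) end.
    apply is_series_lerch_term; assumption. }
  assert (Hint : RInt (bern_integrand x y) 0 y = W - lerch_term x y 0).
  { rewrite <- (is_series_unique _ _ Htail).
    symmetry. apply is_series_unique, is_series_lerch_term_S; assumption. }
  replace (W + x * (y + 1 - exp y)) with (RInt (bern_integrand x y) 0 y).
  - apply is_series_bern_integral; assumption.
  - rewrite Hint. unfold lerch_term. simpl. field. lra.
Qed.
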